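(* Let $f:\mathbb{R}^n\to\mathbb{R}$ be a continuously differentiable convex function and $s$ a positive integer. Let $h(x)=\sum_{i=1}^n h_i(x_i)$ be separable, with each $h_i:\mathbb{R}\to\mathbb{R}$ continuously differentiable and strictly convex, and suppose $f$ is $L_h$-smooth relative to $h$ (i.e. $L_h h-f$ is convex) for some $L_h>0$. If $x\in C_s$ is a CW-minimum point of $f$, then $$x\in\operatorname*{argmin}_{y\in C_s}\ \nabla f(x)^T(y-x)+L_h D_h(y,x),$$ i.e. $x$ is $L_h$-Bregman stationary with respect to $h$.
   Context: $C_s=\{x\in\mathbb{R}^n:\|x\|_0\le s\}$ where $\|x\|_0$ is the number of nonzero entries. $D_h(y,x)=h(y)-h(x)-\nabla h(x)^T(y-x)$. $I_1(x)=\{i:x_i\ne0\}$; $e_j$ is the $j$-th standard basis vector. A point $x\in C_s$ is a CW-minimum point of $f$ if either $\|x\|_0<s$ and $f(x)\le f(x+te_i)$ for all $t\in\mathbb{R}$ and all $i=1,\dots,n$; or $\|x\|_0=s$ and $f(x)\le f(x-x_ie_i+te_j)$ for all $t\in\mathbb{R}$, all $i\in I_1(x)$ and all $j=1,\dots,n$. *)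

From HB Require Import structures.
From mathcomp Require Import all_boot all_order all_algebra.
From mathcomp Require Import all_classical all_reals all_analysis.
Set Implicit Arguments. Unset Strict Implicit. Unset Printing Implicit Defensive.
Import Order.TTheory GRing.Theory Num.Theory.
Import numFieldNormedType.Exports.
Local Open Scope ring_scope.

Section Defs.
Variables (R : realType) (n : nat).

Definition l0norm (x : 'rV[R]_n) : nat := #|[set i : 'I_n | x 0 i != 0]|.

Definition Cs (s : nat) : set 'rV[R]_n := [set x | (l0norm x <= s)%N].

Definition I1 (x : 'rV[R]_n) : {set 'I_n} := [set i | x 0 i != 0].

Definition evec (j : 'I_n) : 'rV[R]_n := delta_mx 0 j.

Definition convex_fun (f : 'rV[R]_n -> R) : Prop :=
  forall (x y : 'rV[R]_n) (t : R), 0 <= t <= 1 ->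
    f (t *: x + (1 - t) *: y) <= t * f x + (1 - t) * f y.

(* continuously differentiable: differentiable everywhere and every
   directional derivative x |-> 'd f x v is continuous (equivalent, in finite
   dimension, to continuity of x |-> 'd f x) *)
Definition C1 (f : 'rV[R]_n -> R) : Prop :=
  (forall x, differentiable f x) /\ (forall v, continuous (fun x => 'd f x v)).

Definition sep_h (hs : 'I_n -> R -> R) (x : 'rV[R]_n) : R :=
  \sum_(i < n) hs i (x 0 i).

Definition bregman (h : 'rV[R]_n -> R) (y x : 'rV[R]_n) : R :=
  h y - h x - 'd h x (y - x).

Definition CW_minimum (s : nat) (f : 'rV[R]_n -> R) (x : 'rV[R]_n) : Prop :=
  Cs s x /\
  (((l0norm x < s)%N /\ forall (t : R) (i : 'I_n), f x <= f (x + t *: evec i))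
   \/
   ((l0norm x = s) /\ forall (t : R) (i j : 'I_n), i \in I1 x ->
       f x <= f (x - x 0 i *: evec i + t *: evec j))).

End Defs.

Definition strictly_convex1 (R : realType) (g : R -> R) : Prop :=
  forall (a b t : R), a != b -> 0 < t < 1 ->
    g (t * a + (1 - t) * b) < t * g a + (1 - t) * g b.

Definition C1_real (R : realType) (g : R -> R) : Prop :=
  (forall a : R, derivable g a 1) /\ continuous (derive1 g).

From HB Require Import structures.
From mathcomp Require Import all_boot all_order all_algebra.
From mathcomp Require Import all_classical all_reals all_analysis.
From mathcomp Require Import ring lra zify.
Set Implicit Arguments.
Unset Strict Implicit.
Unset Printing Implicit Defensive.
Import Order.TTheory GRing.Theory Num.Theory.
Import numFieldNormedType.Exports.
Local Open Scope ring_scope.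

(* Relative smoothness (L h - f convex) yields the descent inequality
   f z <= f x + grad f(x)^T (z - x) + L D_h(z, x), so the Bregman model on the
   right is nonnegative at every z with f x <= f z, in particular at the
   coordinate moves against which a CW-minimum is tested.  For separable h the
   model splits as a sum of one-variable terms phi_k(z_k) with phi_k(x_k) = 0.
   If ||x||_0 < s every phi_k is nonnegative.  If ||x||_0 = s, then phi_k >= 0
   on the support of x and phi_i(0) + phi_j(t) >= 0 whenever i leaves and j
   enters the support; a y in C_s has at most as many entering as leaving
   coordinates, so pairing them off shows that the model at y is nonnegative. *)

Lemma card_setD_le (T : finType) (A B : {set T}) :
  (#|B| <= #|A|)%N -> (#|B :\: A| <= #|A :\: B|)%N.
Proof. by have := cardsID A B; have := cardsID B A; rewrite finset.setIC; lia. Qed.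

Lemma sumr_ge0_pairing (R : realDomainType) (I : finType) (a : I -> R)
    (A B : {set I}) :
  [disjoint A & B] -> (#|A| <= #|B|)%N ->
  {in ~: A, forall k, 0 <= a k} -> {in B & A, forall i j, 0 <= a i + a j} ->
  0 <= \sum_k a k.
Proof.
move=> dAB leAB pos pair.
have [B0 | [i0 i0B]] := set_0Vmem B.
  move: leAB; rewrite B0 cards0 leqn0 cards_eq0 => /eqP A0.
  by apply: sumr_ge0 => k _; apply: pos; rewrite A0 !inE.
have notA k : k \in B -> k \in ~: A by rewrite inE => /(disjointFl dAB) ->.
case: (arg_minP a i0B) => i iB min_i.
have ai_ge0 : 0 <= a i by apply/pos/notA.
have sumA : - (#|A|%:R * a i) <= \sum_(k in A) a k.
  rewrite -mulrN mulr_natl -sumr_const; apply: ler_sum => j jA.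
  by rewrite -subr_ge0 opprK addrC; exact: pair.
have sumB : #|B|%:R * a i <= \sum_(k in B) a k.
  by rewrite mulr_natl -sumr_const; apply: ler_sum => k kB; exact: min_i.
have sum_rest : 0 <= \sum_(k | (k \notin A) && (k \notin B)) a k.
  by apply: sumr_ge0 => k /andP[kA _]; apply: pos; rewrite inE.
have cardAB : #|A|%:R * a i <= #|B|%:R * a i by rewrite ler_wpM2r // ler_nat.
rewrite (bigID (mem A)) /= [\sum_(k | k \notin A) _](bigID (mem B)) /=.
rewrite [\sum_(k | (k \notin A) && (k \in B)) _](eq_bigl (mem B)); first lra.
by move=> k; apply: andb_idl => /notA; rewrite inE.
Qed.

Section BregmanModel.
Variables (R : realType) (n : nat).
Implicit Types (f g h : 'rV[R]_n -> R) (x z : 'rV[R]_n).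

Lemma convex_fun_diff_le g x z :
  convex_fun g -> differentiable g x -> 'd g x (z - x) <= g z - g x.
Proof.
move=> cvx dg; have dv : derivable g x (z - x) by exact: diff_derivable.
rewrite -deriveE // /derive (cvg_at_rightE _ _ dv).
set q := fun t : R => _.
apply: limr_le.
  apply/cvg_ex; exists (lim (q @ 0^')%classic); apply: cvg_trans dv.
  by apply: cvg_app; apply: within_subset => t; exact: lt0r_neq0.
near=> t.
have t_gt0 : 0 < t by near: t; exact: nbhs_right_gt.
have t_le1 : t <= 1 by apply/ltW; near: t; exact: nbhs_right_lt.
have := cvx z x t; rewrite t_le1 ltW //= => /(_ isT).
have -> : t *: z + (1 - t) *: x = t *: (z - x) + x.
  by rewrite scalerBr scalerBl scale1r addrA addrAC.
rewrite /q /= ler_pdivrMl // mulrBr; lra.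
Unshelve. all: by end_near.
Qed.

Definition bregman_model f h (L : R) x z := 'd f x (z - x) + L * bregman h z x.

Lemma relative_smooth_descent f h (L : R) x z :
  differentiable f x -> differentiable h x ->
  convex_fun (fun y => L * h y - f y) ->
  f z <= f x + bregman_model f h L x z.
Proof.
move=> dfx dhx cvx.
have dLh : differentiable (L *: h) x by exact: differentiableZ.
have := convex_fun_diff_le z cvx (differentiableB dLh dfx).
rewrite (diffB dLh dfx) (diffZ L dhx) /bregman_model /bregman.
have key (fz fx hz hx df dh : R) :
    L * dh - df <= L * hz - fz - (L * hx - fx) ->
    fz <= fx + (df + L * (hz - hx - dh)).
  move=> le_d; rewrite -subr_ge0.
  have -> : fx + (df + L * (hz - hx - dh)) - fz
          = L * hz - fz - (L * hx - fx) - (L * dh - df) by ring.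
  by rewrite subr_ge0.
exact: key.
Qed.

End BregmanModel.

Section SeparableModel.
Variables (R : realType) (n : nat).

Lemma differentiable_sep_h (hs : 'I_n -> R -> R) (x : 'rV[R]_n) :
  (forall i, derivable (hs i) (x 0 i) 1) -> differentiable (sep_h hs) x.
Proof.
move=> dhs; have -> : sep_h hs = \sum_(i < n) (fun y : 'rV[R]_n => hs i (y 0 i)).
  by apply: funext => y; rewrite fct_sumE.
apply: differentiable_sum => i.
apply: (differentiable_comp (f := fun y : 'rV[R]_n => y 0 i)).
  exact: differentiable_coord.
exact/derivable1_diffP.
Qed.

Lemma linear_row_sum_delta (l : {linear 'rV[R]_n -> R}) (w : 'rV[R]_n) :
  l w = \sum_i w 0 i * l (evec R i).
Proof.
rewrite {1}(row_sum_delta w) linear_sum; apply: eq_bigr => i _.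
by rewrite linearZ.
Qed.

Variables (f : 'rV[R]_n -> R) (hs : 'I_n -> R -> R) (L : R) (x : 'rV[R]_n).

Definition coord_model (i : 'I_n) (t : R) :=
  (t - x 0 i) * ('d f x (evec R i) - L * 'd (sep_h hs) x (evec R i))
  + L * (hs i t - hs i (x 0 i)).

Lemma coord_model_id i : coord_model i (x 0 i) = 0.
Proof. by rewrite /coord_model !subrr mul0r mulr0 addr0. Qed.

Lemma bregman_model_sep_h (z : 'rV[R]_n) :
  bregman_model f (sep_h hs) L x z = \sum_i coord_model i (z 0 i).
Proof.
rewrite /bregman_model /bregman /sep_h.
rewrite (linear_row_sum_delta ('d f x) (z - x)).
rewrite (linear_row_sum_delta ('d (sep_h hs) x) (z - x)).
rewrite -!sumrB mulr_sumr -big_split /=; apply: eq_bigr => i _.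
have split_term (t u a b p q : R) :
  (t - u) * a + L * (p - q - (t - u) * b) = (t - u) * (a - L * b) + L * (p - q).
  by ring.
by rewrite /coord_model !mxE; exact: split_term.
Qed.

Lemma bregman_model_sep_h_on (J : {set 'I_n}) (z : 'rV[R]_n) :
  {in ~: J, forall k, z 0 k = x 0 k} ->
  bregman_model f (sep_h hs) L x z = \sum_(k in J) coord_model k (z 0 k).
Proof.
move=> zx; rewrite bregman_model_sep_h (bigID (mem J)) /= addrC big1 ?add0r //.
by move=> k kJ; rewrite zx ?inE // coord_model_id.
Qed.

End SeparableModel.

Section CoordinatewiseMinimum.
Variables (R : realType) (n : nat) (f : 'rV[R]_n -> R) (hs : 'I_n -> R -> R).
Variables (L : R) (x : 'rV[R]_n).
Hypotheses (dfx : differentiable f x) (dhx : differentiable (sep_h hs) x).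
Hypothesis cvx : convex_fun (fun y => L * sep_h hs y - f y).

Let model_ge0 z : f x <= f z -> 0 <= bregman_model f (sep_h hs) L x z.
Proof. by have := relative_smooth_descent z dfx dhx cvx; lra. Qed.

Lemma coord_model_ge0_of_shift :
  (forall t i, f x <= f (x + t *: evec R i)) ->
  forall i t, 0 <= coord_model f hs L x i t.
Proof.
move=> cw i t; have := model_ge0 (cw (t - x 0 i) i).
rewrite (bregman_model_sep_h_on _ _ _ (J := [set i])) => [|k].
  by rewrite big_set1 !mxE !eqxx mulr1 addrC subrK.
by rewrite !inE => /negPf ki; rewrite !mxE eqxx ki mulr0 addr0.
Qed.

Hypothesis cw : forall t i j, i \in I1 x ->
  f x <= f (x - x 0 i *: evec R i + t *: evec R j).

Let swapE t i j k :
  (x - x 0 i *: evec R i + t *: evec R j) 0 k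
  = x 0 k - x 0 i * (k == i)%:R + t * (k == j)%:R.
Proof. by rewrite !mxE !eqxx. Qed.

Lemma coord_model_ge0_of_support i t :
  x 0 i != 0 -> 0 <= coord_model f hs L x i t.
Proof.
move=> xi; have := model_ge0 (cw t (i := i) i _); rewrite inE xi => /(_ isT).
rewrite (bregman_model_sep_h_on _ _ _ (J := [set i])) => [|k].
  by rewrite big_set1 swapE eqxx !mulr1 subrr add0r.
by rewrite !inE => /negPf ki; rewrite swapE ki !mulr0 subr0 addr0.
Qed.

Lemma coord_model_ge0_of_swap i j t : x 0 i != 0 -> x 0 j = 0 ->
  0 <= coord_model f hs L x i 0 + coord_model f hs L x j t.
Proof.
move=> xi xj; have ij : i != j by apply: contraNneq xi => ->; rewrite xj.
have := model_ge0 (cw t (i := i) j _); rewrite inE xi => /(_ isT).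
rewrite (bregman_model_sep_h_on _ _ _ (J := [set i; j])) => [|k].
  rewrite big_setU1 ?inE //= big_set1 !swapE !eqxx (negPf ij) eq_sym (negPf ij).
  by rewrite !mulr1 !mulr0 xj subrr addr0 subr0 add0r.
rewrite !inE negb_or => /andP[/negPf ki /negPf kj].
by rewrite swapE ki kj !mulr0 subr0 addr0.
Qed.

End CoordinatewiseMinimum.

Theorem theorem4p12 (R : realType) (n s : nat) (f : 'rV[R]_n -> R)
  (hs : 'I_n -> R -> R) (L : R) (x : 'rV[R]_n) :
  C1 f -> convex_fun f -> (0 < s)%N ->
  (forall i, C1_real (hs i)) -> (forall i, strictly_convex1 (hs i)) ->
  0 < L -> convex_fun (fun y => L * sep_h hs y - f y) ->
  CW_minimum s f x ->
  forall y : 'rV[R]_n, Cs s y ->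
    'd f x (x - x) + L * bregman (sep_h hs) x x
    <= 'd f x (y - x) + L * bregman (sep_h hs) y x.
Proof.
move=> [dfx _] _ _ hC _ _ cvx [_ cw] y Csy.
have dhx : differentiable (sep_h hs) x.
  by apply: differentiable_sep_h => i; case: (hC i).
rewrite -!/(bregman_model f (sep_h hs) L x _) !bregman_model_sep_h.
rewrite big1 => [|k _]; last exact: coord_model_id.
case: cw => [[_ cw] | [supp_x cw]].
  by apply: sumr_ge0 => i _; apply: coord_model_ge0_of_shift.
apply: (@sumr_ge0_pairing _ _ _ (I1 y :\: I1 x) (I1 x :\: I1 y)).
- apply/finset.setDidPl/finset.setP => k; rewrite !inE.
  by case: (x 0 k != 0); case: (y 0 k != 0).
- by apply: card_setD_le; rewrite -[#|I1 x|]/(l0norm x) supp_x.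
- move=> k; rewrite !inE negb_and negbK.
  have [xk0 | xk _] := eqVneq (x 0 k) 0; last exact: coord_model_ge0_of_support.
  by move=> /= /negPn /eqP ->; have := coord_model_id f hs L x k; rewrite xk0 => ->.
- move=> i j; rewrite !inE => /andP[/negPn/eqP yi xi] /andP[/negPn/eqP xj _].
  by rewrite yi; apply: coord_model_ge0_of_swap.
Qed.
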